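(* Let $k\ge 2$ be a fixed integer and let $c_2,\dots,c_k$ be constants with $0<c_i<\frac{1}{16k^2}\binom{k-1}{i-1}10^{-3\frac{k-i}{k-1}}$. There exist $T_0(k)$ and $N_0(k,T)$ such that for all $T\ge T_0(k)$, $N\ge N_0(k,T)$, and $s=0.001\ln T$, the following holds. Let $\mathcal H=(V,\mathcal E_2\cup\dots\cup\mathcal E_k)$ be a hypergraph on $N$ vertices with average degrees $t_i^{i-1}:=i|\mathcal E_i|/N$ satisfying $t_i^{i-1}\le c_iT^{i-1}(\ln T)^{\frac{k-i}{k-1}}$ for $i=2,\dots,k$. Then there is a set $V^*\subseteq V$ with $|V^*|=n$ such that the induced subhypergraph $\mathcal H^*=\mathcal H[V^*]$ satisfies (a) $\frac34\frac{N}{e^s}\le n\le\frac{N}{e^s}$, and (b) for every $v\in V^*$ and every $i=2,\dots,k$, the number $d_i^*(v)$ of $i$-element edges of $\mathcal H^*$ containing $v$ satisfies $$d_i^*(v)\le\binom{k-1}{i-1}s^{\frac{k-i}{k-1}}\Big(\frac{T}{e^s}\Big)^{i-1}.$$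
   Context: $\mathcal E_i$ denotes the set of edges of size $i$ of a hypergraph; $\mathcal H[V^*]$ is the subhypergraph induced on $V^*$ (all edges contained in $V^*$). *)

From Stdlib Require Import Reals.
From mathcomp Require Import all_boot.
Set Implicit Arguments. Unset Strict Implicit. Unset Printing Implicit Defensive.

Definition edges_of_size (N : nat) (E : {set {set 'I_N}}) (i : nat)
  : {set {set 'I_N}} := [set e in E | #|e| == i].

Definition induced_edges (N : nat) (E : {set {set 'I_N}}) (Vs : {set 'I_N})
  : {set {set 'I_N}} := [set e in E | e \subset Vs].

Definition deg_i (N : nat) (E : {set {set 'I_N}}) (i : nat) (v : 'I_N) : nat :=
  #|[set e in edges_of_size E i | v \in e]|.

Set Warnings "-notation-overridden,-ambiguous-paths".
From Stdlib Require Import Reals Lra.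
From mathcomp Require Import all_boot all_order all_algebra.
From mathcomp Require Import Rstruct zify.
Import Order.TTheory GRing.Theory Num.Theory.
Set Implicit Arguments. Unset Strict Implicit. Unset Printing Implicit Defensive.
Local Open Scope ring_scope.

(* Derandomised alteration.  Give an edge e of size i the weight i n^i / D_i, where D_i
   is the degree bound of (b), and let the density of a vertex set S be the sum of
   these weights over the edges inside S, each divided by |S|^i.  Averaging over the
   deleted vertex and Bernoulli's inequality show that some vertex can always be
   removed without increasing the density, so some n-set S has density at most that
   of V, i.e. at most the expected number of bad vertices of a random n-set; the
   hypothesis on the average degrees makes this at most 3n/64 for n = floor(N/e^s).
   Call v in S bad when the sum of 1/D_|e| over the edges e inside S through v is at
   least 1.  The density of S is the sum of these loads, so at most 3n/64 vertices are
   bad, and the remaining ones form V* : at least 61n/64 >= 3N/(4e^s) of them, with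
   every degree d_i*(v) < D_i. *)

Lemma bernoulli_nat (m j : nat) : ((m.+1 - j) * m.+1 ^ j <= m.+1 * m ^ j)%N.
Proof.
elim: j => [|j IHj]; first by rewrite !expn0 subn0.
have [le_mj | lt_jm] := leqP m j; first by rewrite (_ : m.+1 - j.+1 = 0)%N //; lia.
rewrite !expnS; move: IHj; set p := (m.+1 ^ j)%N; set q := (m ^ j)%N; nia.
Qed.

Lemma bernoulli_ratio (R : realFieldType) (m j : nat) : (0 < m)%N ->
  (m.+1 - j)%:R / m%:R ^+ j <= m.+1%:R / m.+1%:R ^+ j :> R.
Proof.
move=> m_gt0; rewrite ler_pdivrMr ?exprn_gt0 ?ltr0n // mulrAC.
rewrite ler_pdivlMr ?exprn_gt0 ?ltr0n // -!natrX -!natrM ler_nat.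
exact: bernoulli_nat.
Qed.

Section Density.
Variables (R : realFieldType) (N : nat) (E : {set {set 'I_N}}).

Definition edge_density (w : {set 'I_N} -> R) (S : {set 'I_N}) : R :=
  \sum_(e in E | e \subset S) w e / #|S|%:R ^+ #|e|.

Variable w : {set 'I_N} -> R.
Hypothesis w_ge0 : forall e, e \in E -> 0 <= w e.

Lemma sum_edge_density_setD1 (S : {set 'I_N}) : (1 < #|S|)%N ->
  \sum_(v in S) edge_density w (S :\ v) <= #|S|%:R * edge_density w S.
Proof.
case def_S: #|S| => [|[|m]] // _.
have card_D1 v : v \in S -> #|S :\ v| = m.+1.
  by move=> Sv; move: def_S; rewrite (cardsD1 v S) Sv add1n => -[].
rewrite /edge_density.
under eq_bigr => v Sv do rewrite card_D1 //.
rewrite (exchange_big_dep (fun e => (e \in E) && (e \subset S))) /=; last first.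
  by move=> v e _ /andP[-> /subset_trans]; apply; apply: subD1set.
rewrite big_distrr /=; apply: ler_sum => e /andP[Ee sub_eS].
rewrite (eq_bigl (fun v => v \in S :\: e)); last first.
  move=> v; rewrite Ee in_setD subsetD1 sub_eS andbC.
  by case: (v \in S); rewrite ?andbF.
rewrite sumr_const cardsDS // def_S -[X in X <= _]mulr_natl mulrCA.
by rewrite [X in _ <= X]mulrCA ler_wpM2l ?w_ge0 ?bernoulli_ratio.
Qed.

Lemma exists_edge_density_setD1_le (S : {set 'I_N}) : (1 < #|S|)%N ->
  exists2 v, v \in S & edge_density w (S :\ v) <= edge_density w S.
Proof.
move=> S_gt1; apply/exists_inP; apply: contraT => /exists_inPn all_gt.
have lt_sum : \sum_(v in S) edge_density w S < \sum_(v in S) edge_density w (S :\ v).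
  apply: ltr_sum => [|v Sv]; last by rewrite ltNge all_gt.
  have /card_gt0P[x Sx] : (0 < #|S|)%N by apply: ltnW.
  by apply/hasP; exists x; rewrite ?mem_index_enum.
have := sum_edge_density_setD1 S_gt1.
by rewrite mulr_natl -sumr_const leNgt lt_sum.
Qed.

Lemma exists_subset_edge_density_le (n : nat) : (0 < n <= N)%N ->
  exists2 S : {set 'I_N}, #|S| = n & edge_density w S <= edge_density w setT.
Proof.
case/andP=> n_gt0 le_nN; rewrite -(subKn le_nN).
have : (N - n <= N - n)%N by [].
elim: {-2}(N - n)%N => [|d IHd] le_d.
  by exists setT; rewrite ?subn0 ?cardsT ?card_ord.
have [S card_S le_S] := IHd (ltnW le_d).
have [|v Sv le_Sv] := @exists_edge_density_setD1_le S; first by rewrite card_S; lia.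
exists (S :\ v); last exact: le_trans le_Sv le_S.
by move: card_S; rewrite (cardsD1 v S) Sv; lia.
Qed.
End Density.

Lemma deg_i_induced_subset (N : nat) (E : {set {set 'I_N}}) (V S : {set 'I_N}) i v :
  V \subset S -> (deg_i (induced_edges E V) i v <= deg_i (induced_edges E S) i v)%N.
Proof.
move=> sub_VS; apply/subset_leq_card/subsetP => e.
rewrite !inE => /andP[/andP[/andP[-> /subset_trans sub_eS] ->] ->].
by rewrite sub_eS.
Qed.

Section VertexLoad.
Variables (R : realFieldType) (N : nat) (E : {set {set 'I_N}}).

Variable f : {set 'I_N} -> R.

Definition vertex_load (S : {set 'I_N}) (v : 'I_N) : R :=
  \sum_(e in E | (e \subset S) && (v \in e)) f e.

Definition light_vertices (S : {set 'I_N}) := [set v in S | vertex_load S v < 1].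

Lemma sum_vertex_load (S : {set 'I_N}) :
  \sum_(v in S) vertex_load S v = \sum_(e in E | e \subset S) f e *+ #|e|.
Proof.
rewrite (exchange_big_dep (fun e => (e \in E) && (e \subset S))) /=; last first.
  by move=> v e _ /andP[-> /andP[-> _]].
apply: eq_bigr => e /andP[Ee sub_eS]; rewrite -sumr_const; apply: eq_bigl => v.
by rewrite Ee sub_eS /=; apply/andP/idP => [[] | ev]; last rewrite (subsetP sub_eS).
Qed.

Hypothesis f_ge0 : forall e, e \in E -> 0 <= f e.

Lemma vertex_load_ge0 S v : 0 <= vertex_load S v.
Proof. by apply: sumr_ge0 => e /andP[/f_ge0]. Qed.

Lemma card_heavy_le_sum_vertex_load (S : {set 'I_N}) :
  #|S :\: light_vertices S|%:R <= \sum_(v in S) vertex_load S v.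
Proof.
rewrite (big_setID (light_vertices S)) /= -[X in X <= _]add0r.
apply: lerD; first by apply: sumr_ge0 => v _; apply: vertex_load_ge0.
rewrite -sum1_card natr_sum; apply: ler_sum => v.
by rewrite !inE => /andP[heavy Sv]; move: heavy; rewrite Sv -leNgt.
Qed.
End VertexLoad.

Section LightSubset.
Variables (R : realFieldType) (N : nat) (E : {set {set 'I_N}}) (D : nat -> R).
Hypothesis D_gt0 : forall e, e \in E -> 0 < D #|e|.

Lemma sum_by_size (k : nat) (F : nat -> R) : (forall e, e \in E -> (#|e| <= k)%N) ->
  \sum_(e in E) F #|e| = \sum_(i < k.+1) #|edges_of_size E i|%:R * F i.
Proof.
move=> le_Ek.
rewrite (eq_bigr (fun e : {set 'I_N} => \sum_(i < k.+1 | i == #|e| :> nat) F i)); last first.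
  by move=> e Ee; rewrite (big_ord1_eq _ F) ltnS le_Ek.
rewrite (exchange_big_dep xpredT) //=; apply: eq_bigr => i _.
by rewrite mulr_natl -sumr_const; apply: eq_bigl => e; rewrite !inE eq_sym.
Qed.

Let f (e : {set 'I_N}) : R := (D #|e|)^-1.

Let f_ge0 e : e \in E -> 0 <= f e.
Proof. by move=> Ee; rewrite invr_ge0 ltW ?D_gt0. Qed.

Lemma deg_i_le_vertex_load S v i :
  (deg_i (induced_edges E S) i v)%:R / D i <= vertex_load E f S v.
Proof.
rewrite /vertex_load (bigID (fun e : {set 'I_N} => #|e| == i)) /= -[X in X <= _]addr0.
apply: lerD; last by apply: sumr_ge0 => e /andP[/andP[/f_ge0]].
rewrite /deg_i -sumr_const mulr_suml.
rewrite [X in _ <= X](eq_bigl (fun e => e \in [set e in edges_of_size (induced_edges E S) i | v \in e])).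
  by apply: ler_sum => e; rewrite !inE mul1r => /andP[/andP[_ /eqP <-] _].
by move=> e; rewrite !inE -!andbA [_ && (v \in e)]andbC.
Qed.

Lemma exists_light_subset (k n : nat) :
  (0 < n <= N)%N -> (forall e, e \in E -> (#|e| <= k)%N) ->
  exists V : {set 'I_N}, [/\ (#|V| <= n)%N,
    n%:R <= #|V|%:R + \sum_(i < k.+1) #|edges_of_size E i|%:R * (i%:R * (n%:R / N%:R) ^+ i / D i)
    & forall v, v \in V -> forall i, 0 < D i -> (deg_i (induced_edges E V) i v)%:R < D i].
Proof.
move=> n_range le_Ek; have n_gt0 : (0 < n)%N by case/andP: n_range.
pose w (e : {set 'I_N}) := #|e|%:R * f e * n%:R ^+ #|e|.
have w_ge0 e : e \in E -> 0 <= w e.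
  by move=> Ee; rewrite mulr_ge0 ?exprn_ge0 ?mulr_ge0 ?f_ge0.
have [S card_S le_S] := exists_subset_edge_density_le w_ge0 n_range.
have density_S : edge_density E w S = \sum_(e in E | e \subset S) f e *+ #|e|.
  apply: eq_bigr => e _; rewrite card_S /w mulfK ?mulr_natl //.
  by rewrite expf_neq0 // pnatr_eq0 -lt0n.
have density_T : edge_density E w setT
    = \sum_(i < k.+1) #|edges_of_size E i|%:R * (i%:R * (n%:R / N%:R) ^+ i / D i).
  rewrite /edge_density cardsT card_ord.
  rewrite (eq_bigl (fun e => e \in E)) => [|e]; last by rewrite subsetT andbT.
  rewrite -(sum_by_size (fun i => i%:R * (n%:R / N%:R) ^+ i / D i)) //.
  by apply: eq_bigr => e _; rewrite /w /f expr_div_n [in RHS]mulrA [RHS]mulrAC (mulrAC (#|e|%:R)).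
have sub_VS : light_vertices E f S \subset S.
  by apply/subsetP => v; rewrite inE => /andP[].
exists (light_vertices E f S); split.
- by rewrite -card_S subset_leq_card.
- rewrite -density_T -card_S -(cardsID (light_vertices E f S) S) (setIidPr sub_VS).
  rewrite natrD lerD2l; apply: le_trans le_S; rewrite density_S -sum_vertex_load.
  exact: card_heavy_le_sum_vertex_load.
- move=> v; rewrite inE => /andP[Sv light_v] i D_i_gt0.
  have le_deg := deg_i_induced_subset E i v sub_VS.
  apply: le_lt_trans (_ : (deg_i (induced_edges E S) i v)%:R < D i); first by rewrite ler_nat.
  by rewrite -[D i]mul1r -ltr_pdivrMr // (le_lt_trans (deg_i_le_vertex_load S v i)).
Qed.

End LightSubset.

Local Close Scope ring_scope.
Open Scope R_scope.

Lemma Rpower_gt0 x y : 0 < Rpower x y.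
Proof. exact: exp_pos. Qed.

Lemma ln_div_gt0 (T d : R) : 1 < T -> 0 < d -> 0 < ln T / d.
Proof.
move=> T_gt1 d_gt0; apply: Rdiv_lt_0_compat => //.
by rewrite -ln_1; apply: ln_increasing; lra.
Qed.

(* With ln T = 1000 s, the factor 10^(-3a) in the bound on c_i exactly absorbs
   (ln T)^a = 1000^a s^a. *)
Lemma mul_Rpower_1000_le (c K s a : R) : 0 < s -> 0 <= c ->
  c < K * Rpower 10 (- (3 * a)) -> c * Rpower (1000 * s) a <= K * Rpower s a.
Proof.
move=> s_gt0 c_ge0 lt_cK.
have Rpower_1000 : Rpower 1000 a * Rpower 10 (- (3 * a)) = 1.
  have -> : 1000 = Rpower 10 (INR 3) by rewrite Rpower_pow /=; lra.
  rewrite Rpower_mult -Rpower_plus (_ : INR 3 * a + - (3 * a) = 0) ?Rpower_O //=; lra.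
have le_c1000_K : c * Rpower 1000 a <= K.
  have := Rmult_lt_compat_r _ _ _ (Rpower_gt0 1000 a) lt_cK.
  rewrite Rmult_assoc (Rmult_comm (Rpower 10 _)) Rpower_1000; lra.
rewrite -Rpower_mult_distr -?Rmult_assoc; try lra.
by apply: Rmult_le_compat_r => //; apply: Rlt_le; apply: Rpower_gt0.
Qed.

Lemma sampled_degree_le (m : nat) (a x c T Q D0 y K : R) :
  0 <= x -> 0 < T -> T * x <= y -> 0 <= c * Q ->
  a <= c * T ^ m * Q -> c * Q <= K * D0 -> a * x ^ m <= K * D0 * y ^ m.
Proof.
move=> x_ge0 T_gt0 le_Tx_y cQ_ge0 le_a le_cQ.
have Tx_ge0 : 0 <= T * x by nra.
have pow_le_y : (T * x) ^ m <= y ^ m by apply: pow_incr.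
have := pow_le _ m x_ge0; have := pow_le _ m Tx_ge0.
rewrite Rpow_mult_distr in pow_le_y * => *; nra.
Qed.

Definition degree_bound (k : nat) (s y : R) (i : nat) : R :=
  INR 'C(k - 1, i - 1) * Rpower s (INR (k - i) / INR (k - 1)) * y ^ (i - 1).

Lemma degree_bound_gt0 k s y i : (2 <= i <= k)%N -> 0 < y -> 0 < degree_bound k s y i.
Proof.
move=> /andP[le_2i le_ik] y_gt0.
have binom_gt0 : 0 < INR 'C(k - 1, i - 1) by apply: lt_0_INR; apply/ssrnat.ltP; rewrite bin_gt0; lia.
apply: Rmult_lt_0_compat; last exact: pow_lt.
exact: Rmult_lt_0_compat binom_gt0 (Rpower_gt0 _ _).
Qed.

Lemma size_class_term_le (k i Ei N n : nat) (c T : R) :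
  let s := ln T / 1000 in
  (2 <= i <= k)%N -> 1 < T -> (0 < N)%N -> INR n <= INR N / exp s -> 0 <= c ->
  c < / (16 * INR k ^ 2) * INR 'C(k - 1, i - 1)
      * Rpower 10 (- (3 * INR (k - i) / INR (k - 1))) ->
  INR i * INR Ei / INR N <= c * T ^ (i - 1) * Rpower (ln T) (INR (k - i) / INR (k - 1)) ->
  INR Ei * (INR i * (INR n / INR N) ^ i / degree_bound k s (T / exp s) i)
    <= / (16 * INR k ^ 2) * INR n.
Proof.
move=> s; case: i => [|m] // range_i T_gt1 N_gt0 le_n c_ge0 lt_c le_avg.
rewrite /degree_bound subn1 succnK in le_avg lt_c *.
set x := INR n / INR N; set y := T / exp s; set K := / (16 * INR k ^ 2).
set C := INR 'C(k - 1, m); set a := INR (k - m.+1) / INR (k - 1).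
have N_gt0R : 0 < INR N by apply: lt_0_INR; apply/ssrnat.ltP.
have s_gt0 : 0 < s by apply: ln_div_gt0; lra.
have exp_s_gt0 := exp_pos s.
have y_gt0 : 0 < y by apply: Rdiv_lt_0_compat; lra.
have x_ge0 : 0 <= x by apply: Rmult_le_pos; [apply: pos_INR | apply/Rlt_le/Rinv_0_lt_compat].
have le_Tx_y : T * x <= y.
  rewrite /x /y; apply: Rmult_le_compat_l; first lra.
  apply: (Rmult_le_reg_r (INR N)) => //; rewrite /Rdiv Rmult_assoc Rinv_l; lra.
have le_cQ : c * Rpower (ln T) a <= K * C * Rpower s a.
  rewrite (_ : ln T = 1000 * s); last by rewrite /s; field.
  by apply: mul_Rpower_1000_le => //; rewrite /a /Rdiv -Rmult_assoc.
have cQ_ge0 : 0 <= c * Rpower (ln T) a by apply: Rmult_le_pos => //; apply/Rlt_le/Rpower_gt0.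
have T_gt0 : 0 < T by lra.
have le_sampled := sampled_degree_le x_ge0 T_gt0 le_Tx_y cQ_ge0 le_avg le_cQ.
have C_gt0 : 0 < C.
  by apply: lt_0_INR; apply/ssrnat.ltP; rewrite bin_gt0; case/andP: range_i; lia.
have P_gt0 := Rpower_gt0 s a; have ym_gt0 := pow_lt y m y_gt0.
have D_gt0 : 0 < C * Rpower s a * y ^ m by apply: Rmult_lt_0_compat => //; nra.
rewrite (_ : INR Ei * _ = INR m.+1 * INR Ei / INR N * x ^ m * (INR n / (C * Rpower s a * y ^ m))).
  apply: Rle_trans (Rmult_le_compat_r _ _ _ _ le_sampled) _.
    by apply/Rmult_le_pos/Rlt_le/Rinv_0_lt_compat => //; apply: pos_INR.
  by apply: Req_le; field; split; [|split]; apply: Rgt_not_eq.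
by rewrite /x /=; field; split; [|split; [|split]]; apply: Rgt_not_eq.
Qed.

Lemma sum_size_class_terms_le (k N n : nat) (E : {set {set 'I_N}}) (c : nat -> R) (T : R) :
  let s := ln T / 1000 in
  (2 <= k)%N ->
  (forall i : nat, (2 <= i <= k)%N ->
     0 < c i /\
     c i < / (16 * INR k ^ 2) * INR 'C(k - 1, i - 1)
             * Rpower 10 (- (3 * INR (k - i) / INR (k - 1)))) ->
  1 < T -> (0 < N)%N -> INR n <= INR N / exp s ->
  (forall e, e \in E -> (2 <= #|e| <= k)%N) ->
  (forall i : nat, (2 <= i <= k)%N ->
     INR i * INR #|edges_of_size E i| / INR N
       <= c i * T ^ (i - 1) * Rpower (ln T) (INR (k - i) / INR (k - 1))) ->
  \big[Rplus/0]_(i < k.+1)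
      (INR #|edges_of_size E i| * (INR i * (INR n / INR N) ^ i / degree_bound k s (T / exp s) i))
    <= 3 / 64 * INR n.
Proof.
move=> s le_2k c_bounds T_gt1 N_gt0 le_n sizes_E avg_deg.
have k_ge2 : 2 <= INR k by apply: (le_INR 2); apply/ssrnat.leP.
have n_ge0 := pos_INR n.
have k_frac_le : INR k.+1 * / (16 * INR k ^ 2) <= 3 / 64.
  rewrite S_INR; apply: (Rmult_le_reg_r (16 * INR k ^ 2)); first nra.
  rewrite (_ : _ * / _ * _ = INR k + 1); [nra | field; nra].
apply: Rle_trans (_ : INR k.+1 * (/ (16 * INR k ^ 2) * INR n) <= _); last first.
  by rewrite -Rmult_assoc; apply: Rmult_le_compat_r.
have -> : INR k.+1 * (/ (16 * INR k ^ 2) * INR n)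
    = \big[Rplus/0]_(i < k.+1) (/ (16 * INR k ^ 2) * INR n).
  rewrite big_const_ord; elim: k.+1 => [|m IHm]; first by rewrite /=; ring.
  by rewrite S_INR iterS -IHm; ring.
apply: (big_ind2 (fun x y => x <= y)) => [|x1 x2 y1 y2 ? ?|i _]; try lra.
have [range_i | out_i] := boolP (2 <= i <= k)%N.
  have [c_gt0 lt_c] := c_bounds i range_i.
  exact: (size_class_term_le range_i T_gt1 N_gt0 le_n (Rlt_le _ _ c_gt0) lt_c (avg_deg i range_i)).
rewrite (_ : edges_of_size E i = set0) ?cards0 ?Rmult_0_l.
  apply: Rmult_le_pos; [apply/Rlt_le/Rinv_0_lt_compat; nra | exact: n_ge0].
apply/setP => e; rewrite !inE; apply/andP => -[/sizes_E + /eqP size_e].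
by rewrite size_e; move: out_i (ltn_ord i); lia.
Qed.

Lemma exists_nat_window (x : R) : 5 <= x -> exists n : nat, 4 / 5 * x <= INR n <= x.
Proof.
move=> x_ge5; exists (Num.truncn x).
have x_ge0 : 0 <= x by lra.
have le_n : INR (Num.truncn x) <= x.
  by rewrite INRE; apply/RleP; rewrite truncn_le; apply/RleP.
have : x < INR (Num.truncn x) + 1.
  by rewrite -S_INR INRE; apply/RltP; apply: truncnS_gt.
lra.
Qed.

Lemma exists_sample_size (s : R) : 0 <= s ->
  exists N0 : nat, forall N : nat, (N0 <= N)%N ->
  exists n : nat, (0 < n <= N)%N /\ 4 / 5 * (INR N / exp s) <= INR n <= INR N / exp s.
Proof.
move=> s_ge0; have [N0 gt_N0] := INR_unbounded (5 * exp s).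
exists N0 => N le_N0N; have le_N := le_INR _ _ (elimT ssrnat.leP le_N0N).
have exp_s_ge1 : 1 <= exp s by have := exp_ineq1_le s; lra.
have x_exp_s : INR N / exp s * exp s = INR N by field; lra.
have x_ge5 : 5 <= INR N / exp s by nra.
have [n [lo_n hi_n]] := exists_nat_window x_ge5.
exists n; split => //; apply/andP; split.
  by apply/ssrnat.ltP; apply: INR_lt; rewrite /=; lra.
by apply/ssrnat.leP; apply: INR_le; nra.
Qed.

Theorem mainTheorem3 :
  forall (k : nat), (2 <= k)%N ->
  forall (c : nat -> R),
  (forall i : nat, (2 <= i <= k)%N ->
     0 < c i /\
     c i < / (16 * INR k ^ 2) * INR 'C(k - 1, i - 1)
             * Rpower 10 (- (3 * INR (k - i) / INR (k - 1)))) ->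
  exists T0 : R, forall T : R, T >= T0 ->
  exists N0 : nat, forall N : nat, (N0 <= N)%N ->
  let s := ln T / 1000 in
  forall E : {set {set 'I_N}},
  (forall e, e \in E -> (2 <= #|e| <= k)%N) ->
  (forall i : nat, (2 <= i <= k)%N ->
     INR i * INR #|edges_of_size E i| / INR N
       <= c i * T ^ (i - 1) * Rpower (ln T) (INR (k - i) / INR (k - 1))) ->
  exists Vs : {set 'I_N},
    (3 / 4 * (INR N / exp s) <= INR #|Vs| <= INR N / exp s) /\
    (forall v : 'I_N, v \in Vs ->
     forall i : nat, (2 <= i <= k)%N ->
       INR (deg_i (induced_edges E Vs) i v)
         <= INR 'C(k - 1, i - 1) * Rpower s (INR (k - i) / INR (k - 1))
            * (T / exp s) ^ (i - 1)).
Proof.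
move=> k le_2k c c_bounds; exists 2 => T le_2T.
have T_gt1 : 1 < T by lra.
have [N0 sample] := exists_sample_size (Rlt_le _ _ (ln_div_gt0 T_gt1 (ltac:(lra) : 0 < 1000))).
exists N0 => N le_N0N s E sizes_E avg_deg.
have [n [n_range [lo_n hi_n]]] := sample N le_N0N; rewrite -/s in lo_n hi_n.
have y_gt0 : 0 < T / exp s by apply: Rdiv_lt_0_compat; [lra | apply: exp_pos].
have D_gt0 e : e \in E -> (0 < degree_bound k s (T / exp s) #|e|)%O.
  by move=> /sizes_E range_e; apply/RltP/degree_bound_gt0.
have [V [le_Vn heavy light]] :=
  exists_light_subset D_gt0 n_range (fun e Ee => proj2 (andP (sizes_E e Ee))).
have heavy_R : INR n <= INR #|V| + \big[Rplus/0]_(i < k.+1)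
    (INR #|edges_of_size E i| * (INR i * (INR n / INR N) ^ i / degree_bound k s (T / exp s) i)).
  by apply/RleP; rewrite !INRE; under eq_bigr => i _ do rewrite !INRE RpowE.
have N_gt0 : (0 < N)%N by case/andP: n_range; lia.
have := sum_size_class_terms_le le_2k c_bounds T_gt1 N_gt0 hi_n sizes_E avg_deg.
rewrite -/s => sum_le; exists V; split.
  by have := le_INR _ _ (elimT ssrnat.leP le_Vn); have := pos_INR n; lra.
move=> v Vv i range_i.
have /RltP := light v Vv i (introT RltP (@degree_bound_gt0 k s _ i range_i y_gt0)).
by rewrite -INRE /degree_bound; lra.
Qed.
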